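(* Let $r\in[0,1]$ and $n\in\mathbb{N}$. If $\omega=(\omega_1,\dots,\omega_n)$ and $\nu=(\nu_1,\dots,\nu_n)$ are distinct elements of $\{0,1\}^n$ with $[\omega]_r\cap[\nu]_r\neq\emptyset$, then there is a unique $i\in\{1,\dots,n\}$ with $\omega_i\neq\nu_i$, and $\omega_j=\nu_j$ for all $j\neq i$.
   Context: For $r\in[0,1]$, $f_{r,0}(x)=\frac{x}{2-r+rx}$ and $f_{r,1}(x)=\frac{1+(1-r)(1-x)}{2-r+rx}$ are the inverse branches of the map $T_r:[0,1]\to[0,1]$, $T_r(x)=\frac{(2-r)x}{1-rx}$ ($x\le1/2$), $T_r(x)=\frac{(2-r)(1-x)}{1-r+rx}$ ($x>1/2$). For $\varphi=(\varphi_1,\dots,\varphi_n)\in\{0,1\}^n$, $f_{r,\varphi}=f_{r,\varphi_1}\circ\cdots\circ f_{r,\varphi_n}$ and the cylinder set is $[\varphi]_r=f_{r,\varphi}([0,1])$. *)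

From Stdlib Require Import Reals List.
Open Scope R_scope.

(* Inverse branches of T_r. *)
Definition f0 (r x : R) : R := x / (2 - r + r * x).
Definition f1 (r x : R) : R := (1 + (1 - r) * (1 - x)) / (2 - r + r * x).

(* f_{r,b} for a digit b : bool (false = 0, true = 1). *)
Definition fdig (r : R) (b : bool) (x : R) : R := if b then f1 r x else f0 r x.

(* f_{r,phi} = f_{r,phi_1} o ... o f_{r,phi_n}; a word is a list of digits,
   its head being phi_1. *)
Definition fword (r : R) (phi : list bool) (x : R) : R :=
  fold_right (fun b acc => fdig r b acc) x phi.

Definition cylinder (r : R) (phi : list bool) (y : R) : Prop :=
  exists x, 0 <= x <= 1 /\ y = fword r phi x.

(** The two branches map [0,1] onto [0,1/2] and [1/2,1] respectively, are
    injective, and hit the endpoints 0, 1 and the midpoint 1/2 only at 0 or 1.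
    Peel off the first digits of two words whose cylinders meet at y.  If the
    digits agree, injectivity lets us recurse on the tails.  If they differ,
    y = 1/2, so both tails are evaluated at points mapped to 1; and a point of
    {0,1} lies in the cylinder of exactly one word of each length, hence the
    tails coincide. *)
From Stdlib Require Import Reals List Lra Psatz Bool.
Open Scope R_scope.

Section Branches.

Variables r z : R.
Hypothesis Hr : 0 <= r <= 1.
Hypothesis Hz : 0 <= z <= 1.

Let den_pos : 0 < 2 - r + r * z.
Proof. nra. Qed.

Lemma f0_mul_den : f0 r z * (2 - r + r * z) = z.
Proof. unfold f0; field; lra. Qed.

Lemma f1_mul_den : f1 r z * (2 - r + r * z) = 1 + (1 - r) * (1 - z).
Proof. unfold f1; field; lra. Qed.

Lemma f0_range : 0 <= f0 r z <= 1 / 2.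
Proof. pose proof f0_mul_den; split; nra. Qed.

Lemma f1_range : 1 / 2 <= f1 r z <= 1.
Proof. pose proof f1_mul_den; split; nra. Qed.

Lemma f0_eq0 : f0 r z = 0 -> z = 0.
Proof. pose proof f0_mul_den; nra. Qed.

Lemma f1_eq1 : f1 r z = 1 -> z = 0.
Proof. pose proof f1_mul_den; nra. Qed.

Lemma f0_eq_half : f0 r z = 1 / 2 -> z = 1.
Proof. pose proof f0_mul_den; nra. Qed.

Lemma f1_eq_half : f1 r z = 1 / 2 -> z = 1.
Proof. pose proof f1_mul_den; nra. Qed.

End Branches.

Lemma fword_range r w x : 0 <= r <= 1 -> 0 <= x <= 1 -> 0 <= fword r w x <= 1.
Proof.
  intros Hr Hx; induction w as [|[|] w IH]; simpl; unfold fdig.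
  - lra.
  - pose proof (f1_range r _ Hr IH); lra.
  - pose proof (f0_range r _ Hr IH); lra.
Qed.

Lemma fdig_inj r b z z' : 0 <= r <= 1 -> 0 <= z <= 1 -> 0 <= z' <= 1 ->
  fdig r b z = fdig r b z' -> z = z'.
Proof.
  intros Hr Hz Hz' E; unfold fdig in E; destruct b.
  - pose proof (f1_mul_den r z Hr Hz); pose proof (f1_mul_den r z' Hr Hz').
    pose proof (f1_range r z Hr Hz); set (a := f1 r z) in *; rewrite <- E in *.
    assert (Hfac : (z - z') * (a * r + 1 - r) = 0) by nra.
    destruct (Rmult_integral _ _ Hfac); nra.
  - pose proof (f0_mul_den r z Hr Hz); pose proof (f0_mul_den r z' Hr Hz').
    pose proof (f0_range r z Hr Hz); set (a := f0 r z) in *; rewrite <- E in *.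
    assert (Hfac : (z - z') * (1 - a * r) = 0) by nra.
    destruct (Rmult_integral _ _ Hfac); nra.
Qed.

Lemma fword_endpoint_inj r w w' x x' : 0 <= r <= 1 ->
  length w = length w' -> 0 <= x <= 1 -> 0 <= x' <= 1 ->
  fword r w x = fword r w' x' -> fword r w x = 0 \/ fword r w x = 1 -> w = w'.
Proof.
  intros Hr; revert w' x x'.
  induction w as [|b w IH]; intros [|b' w'] x x' Hl Hx Hx' E Hend;
    simpl in Hl; try discriminate; [reflexivity|].
  injection Hl as Hl; simpl in E, Hend; unfold fdig in E, Hend.
  pose proof (fword_range r w x Hr Hx) as Bw.
  pose proof (fword_range r w' x' Hr Hx') as Bw'.
  pose proof (f0_range r _ Hr Bw); pose proof (f1_range r _ Hr Bw).
  pose proof (f0_range r _ Hr Bw'); pose proof (f1_range r _ Hr Bw').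
  destruct b, b'; destruct Hend as [Hend|Hend]; try lra; f_equal.
  - assert (Hw : fword r w x = 0) by exact (f1_eq1 r _ Hr Bw Hend).
    rewrite E in Hend; apply (f1_eq1 r _ Hr Bw') in Hend.
    apply (IH w' x x'); auto; lra.
  - assert (Hw : fword r w x = 0) by exact (f0_eq0 r _ Hr Bw Hend).
    rewrite E in Hend; apply (f0_eq0 r _ Hr Bw') in Hend.
    apply (IH w' x x'); auto; lra.
Qed.

Definition differ_exactly_at (w w' : list bool) (i : nat) : Prop :=
  forall j, nth j w false <> nth j w' false <-> j = i.

Lemma cylinders_meet_differ_once r w w' : 0 <= r <= 1 ->
  length w = length w' -> w <> w' ->
  (exists y, cylinder r w y /\ cylinder r w' y) ->
  exists i, (i < length w)%nat /\ differ_exactly_at w w' i.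
Proof.
  intros Hr; revert w'.
  induction w as [|b w IH]; intros [|b' w'] Hl Hne [y [[x [Hx Ey]] [x' [Hx' Ey']]]];
    simpl in Hl; try discriminate; [congruence|].
  injection Hl as Hl; simpl in Ey, Ey'.
  pose proof (fword_range r w x Hr Hx) as Bw.
  pose proof (fword_range r w' x' Hr Hx') as Bw'.
  destruct (bool_dec b b') as [<-|Hb].
  - assert (Hw : fword r w x = fword r w' x') by (apply (fdig_inj r b); congruence).
    destruct (IH w' Hl) as [i [Hi Hdiff]]; [congruence| |].
    { exists (fword r w x); split; [exists x | exists x']; auto. }
    exists (S i); split; [simpl; lia|].
    intros [|j]; simpl; [split; congruence|].
    split; intro H; [f_equal; apply Hdiff, H | apply Hdiff; congruence].
  - assert (Htail : w = w').
    { unfold fdig in Ey, Ey'.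
      pose proof (f0_range r _ Hr Bw); pose proof (f1_range r _ Hr Bw).
      pose proof (f0_range r _ Hr Bw'); pose proof (f1_range r _ Hr Bw').
      destruct b, b'; try congruence.
      - assert (Hone : fword r w x = 1) by (apply (f1_eq_half r); auto; lra).
        assert (Hone' : fword r w' x' = 1) by (apply (f0_eq_half r); auto; lra).
        apply (fword_endpoint_inj r w w' x x'); auto; lra.
      - assert (Hone : fword r w x = 1) by (apply (f0_eq_half r); auto; lra).
        assert (Hone' : fword r w' x' = 1) by (apply (f1_eq_half r); auto; lra).
        apply (fword_endpoint_inj r w w' x x'); auto; lra. }
    subst w'; exists 0%nat; split; [simpl; lia|].
    intros [|j]; simpl; [tauto | split; [tauto | discriminate]].
Qed.

Theorem lemma4p1 (r : R) (n : nat) (omega nu : list bool) :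
  0 <= r <= 1 ->
  length omega = n -> length nu = n ->
  omega <> nu ->
  (exists y, cylinder r omega y /\ cylinder r nu y) ->
  exists i, (i < n)%nat /\
    (forall k, (k < n)%nat -> nth k omega false <> nth k nu false -> k = i) /\
    nth i omega false <> nth i nu false /\
    (forall j, (j < n)%nat -> j <> i -> nth j omega false = nth j nu false).
Proof.
  intros Hr Homega Hnu Hne Hmeet.
  destruct (cylinders_meet_differ_once r omega nu Hr ltac:(congruence) Hne Hmeet)
    as [i [Hi Hdiff]].
  exists i; split; [lia|].
  split; [intros k _; apply Hdiff|].
  split; [apply Hdiff; reflexivity|].
  intros j _ Hji.
  destruct (bool_dec (nth j omega false) (nth j nu false)) as [Heq|Hneq]; [exact Heq|].
  exfalso; exact (Hji (proj1 (Hdiff j) Hneq)).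
Qed.
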